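(* Let $n\geq 2$ and consider the clustered graph of overlapping $n$-permutations. For every cluster $X$ there exists a unique cluster $Y$ such that there are exactly two (parallel) edges from $X$ to $Y$. Moreover, there are no clusters $X,Y$ with three or more edges from $X$ to $Y$.
   Context: An $n$-permutation is a permutation $\pi_1\cdots\pi_n$ of $\{1,\ldots,n\}$. For a word $w$ of distinct numbers, $\mathrm{red}(w)$ is the permutation obtained by replacing the $i$-th smallest letter by $i$. For an $(n-1)$-permutation $\tau$, the cluster with signature $\tau$ is the set of all $n$-permutations $\pi$ with $\mathrm{red}(\pi_1\cdots\pi_{n-1})=\tau$. The clustered graph of overlapping $n$-permutations is the directed multigraph (loops allowed) whose vertices are the $(n-1)!$ clusters and in which every $n$-permutation $\pi$ contributes exactly one edge, going from the cluster containing $\pi$ to the cluster with signature $\mathrm{red}(\pi_2\cdots\pi_n)$. *)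

(* Permutations of {1..n} are encoded 0-based as 'S_n
   (permutations of 'I_n = {0,...,n-1}); positions are also 0-based. *)
From mathcomp Require Import all_boot all_order all_fingroup.
Set Implicit Arguments. Unset Strict Implicit. Unset Printing Implicit Defensive.

Definition red (m : nat) (w : 'I_m -> nat) : 'I_m -> nat :=
  fun i => #|[pred j | w j < w i]|.

Definition has_sig (m : nat) (w : 'I_m -> nat) (tau : 'S_m) : bool :=
  [forall i, red w i == val (tau i)].

Lemma succ_lt (n : nat) (i : 'I_n.-1) : i.+1 < n.
Proof. by case: n i => [|n] [i Hi]. Qed.

Definition prefix_word (n : nat) (pi : 'S_n) : 'I_n.-1 -> nat :=
  fun i => val (pi (widen_ord (leq_pred n) i)).

Definition suffix_word (n : nat) (pi : 'S_n) : 'I_n.-1 -> nat :=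
  fun i => val (pi (Ordinal (succ_lt i))).

(* Clusters are identified with their signatures tau : 'S_(n-1).
   pi lies in cluster sigma iff red(prefix) = sigma, and its edge goes to the
   cluster with signature red(suffix). *)
Definition num_edges (n : nat) (sigma tau : 'S_n.-1) : nat :=
  #|[pred pi : 'S_n | has_sig (prefix_word pi) sigma && has_sig (suffix_word pi) tau]|.

From mathcomp Require Import all_boot all_order all_fingroup zify.
Set Implicit Arguments. Unset Strict Implicit. Unset Printing Implicit Defensive.

(** Deleting the letter at position p of pi : 'S_(m+1) leaves a word whose
  reduction is the permutation s : 'S_m with pi = lift_perm p (pi p) s.  Hence
  the members of a cluster X are the lift_perm ord_max k X, one for each last
  letter k, and the edge of such a member goes to the permutation Y obtained by
  deleting its first letter.  The last entry y of Y determines k up to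
  k in {y, y+1}, so there are at most two edges from X to Y.  Two members give
  the same target only when their last letters are x and x+1, where x is the
  first letter of X; and these two members do give the same target, since they
  differ by exchanging the adjacent values x and x+1 between the first and the
  last position, which becomes invisible once the first letter is deleted. *)

Lemma card_ord_ltn n v : v <= n -> #|[pred i : 'I_n | i < v]| = v.
Proof.
move=> le_vn; have widen_inj : injective (widen_ord le_vn).
  by move=> i j /(congr1 val) eq_ij; apply: val_inj.
rewrite -[RHS]card_ord -(card_image widen_inj).
apply: eq_card => i; rewrite inE; apply/idP/imageP => [lt_iv | [j _ ->]].
  by exists (Ordinal lt_iv); last by apply: val_inj.
exact: (ltn_ord j).
Qed.

Lemma card_ord_val_le2 n (A : {pred 'I_n.+1}) y :
  {in A, forall k : 'I_n.+1, k = y :> nat \/ k = y.+1 :> nat} -> #|A| <= 2.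
Proof.
move=> A_vals; apply: leq_trans (card_size [:: inord y; inord y.+1]).
apply: subset_leq_card; apply/subsetP => k /A_vals [] <-;
  by rewrite inord_val !inE eqxx ?orbT.
Qed.

Lemma bump_mono h : {mono bump h : i j / i < j}.
Proof. by move=> i j; rewrite /bump; lia. Qed.

Section Signature.
Variable m : nat.
Implicit Types (w : 'I_m -> nat) (s tau : 'S_m).

Lemma eq_has_sig w1 w2 tau : w1 =1 w2 -> has_sig w1 tau = has_sig w2 tau.
Proof.
move=> eq_w; apply: eq_forallb => i; congr (_ == _).
by apply: eq_card => j; rewrite !inE !eq_w.
Qed.

Lemma has_sig_mono f w tau :
  {mono f : x y / x < y} -> has_sig (f \o w) tau = has_sig w tau.
Proof.
move=> f_mono; apply: eq_forallb => i; congr (_ == _).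
by apply: eq_card => j; rewrite !inE /= f_mono.
Qed.

Lemma red_perm s i : red (fun j => val (s j)) i = s i.
Proof.
rewrite /red -[RHS](card_ord_ltn (ltnW (ltn_ord (s i)))) -(card_image (@perm_inj _ s)).
apply: eq_card => x; rewrite inE; apply/imageP/idP => [[j lt_j ->] // | lt_x].
by exists ((s^-1)%g x); rewrite ?inE permKV.
Qed.

Lemma has_sig_perm s tau : has_sig (fun j => val (s j)) tau = (s == tau).
Proof.
apply/forallP/eqP => [sig_s | <- i]; last by rewrite red_perm.
by apply/permP => i; apply: val_inj; rewrite /= -red_perm; exact/eqP/sig_s.
Qed.

End Signature.

Section DeletePosition.
Variables (m : nat) (p : 'I_m.+1) (pi : 'S_m.+1).

Definition delete_fun (i : 'I_m) : 'I_m := odflt i (unlift (pi p) (pi (lift p i))).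

Lemma lift_delete_fun i : lift (pi p) (delete_fun i) = pi (lift p i).
Proof.
rewrite /delete_fun; case: unliftP => [j -> // | /perm_inj/eqP].
by rewrite eq_sym (negbTE (neq_lift p i)).
Qed.

Lemma delete_fun_inj : injective delete_fun.
Proof.
by move=> i j /(congr1 (lift (pi p))); rewrite !lift_delete_fun => /perm_inj/lift_inj.
Qed.

Definition delete_perm : 'S_m := perm delete_fun_inj.

Lemma lift_delete_perm i : lift (pi p) (delete_perm i) = pi (lift p i).
Proof. by rewrite permE lift_delete_fun. Qed.

Lemma delete_perm_val i : delete_perm i = unbump (pi p) (pi (lift p i)) :> nat.
Proof. by rewrite -lift_delete_perm /= bumpK. Qed.

Lemma delete_permK : lift_perm p (pi p) delete_perm = pi.
Proof.
apply/permP => k; case: (unliftP p k) => [i -> | ->].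
  by rewrite lift_perm_lift lift_delete_perm.
by rewrite lift_perm_id.
Qed.

Lemma has_sig_delete tau :
  has_sig (fun i => val (pi (lift p i))) tau = (delete_perm == tau).
Proof.
rewrite -has_sig_perm -[in RHS](has_sig_mono _ _ (bump_mono (pi p))).
by apply: eq_has_sig => i /=; rewrite -lift_delete_perm.
Qed.

End DeletePosition.

Lemma delete_lift_perm m (p k : 'I_m.+1) (s : 'S_m) :
  delete_perm p (lift_perm p k s) = s.
Proof.
apply/permP => i; apply: (@lift_inj _ k).
by rewrite -{1}(lift_perm_id p k s) lift_delete_perm lift_perm_lift.
Qed.

Lemma has_sig_prefix_word m (pi : 'S_m.+1) tau :
  has_sig (prefix_word pi) tau = (delete_perm ord_max pi == tau).
Proof.
rewrite -has_sig_delete; apply: eq_has_sig => i.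
rewrite /prefix_word (_ : widen_ord _ i = lift ord_max i) //.
exact/val_inj/esym/lift_max.
Qed.

Lemma has_sig_suffix_word m (pi : 'S_m.+1) tau :
  has_sig (suffix_word pi) tau = (delete_perm ord0 pi == tau).
Proof.
rewrite -has_sig_delete; apply: eq_has_sig => i.
rewrite /suffix_word (_ : Ordinal _ = lift ord0 i) //.
exact/val_inj/esym/lift0.
Qed.

Definition edge_target m (X : 'S_m) (k : 'I_m.+1) : 'S_m :=
  delete_perm ord0 (lift_perm ord_max k X).

Lemma num_edgesE m (X Y : 'S_m) :
  num_edges (n := m.+1) X Y = #|[pred k | edge_target X k == Y]|.
Proof.
have member_inj : injective (fun k => lift_perm ord_max k X).
  by move=> k1 k2 eq_k; rewrite -(lift_perm_id ord_max k1 X) eq_k lift_perm_id.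
rewrite /num_edges -(card_image member_inj); apply: eq_card => pi.
rewrite !inE has_sig_prefix_word has_sig_suffix_word.
apply/andP/imageP => [[/eqP <- Y_pi] | [k Y_k ->]].
  by exists (pi ord_max); rewrite ?inE /edge_target delete_permK.
by rewrite delete_lift_perm.
Qed.

Section Clusters.
Variables (l : nat) (X : 'S_l.+1).

Lemma lift_perm_first k : lift_perm ord_max k X ord0 = lift k (X ord0).
Proof.
have first_pos : ord0 = lift ord_max ord0 :> 'I_l.+2 by apply: val_inj.
by rewrite first_pos lift_perm_lift.
Qed.

Lemma edge_target_last (k : 'I_l.+2) :
  k = bump (bump k (X ord0)) (edge_target X k ord_max) :> nat.
Proof.
have last_pos : lift ord0 ord_max = ord_max :> 'I_l.+2 by apply: val_inj.
have := lift_delete_perm ord0 (lift_perm ord_max k X) ord_max.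
rewrite last_pos lift_perm_id lift_perm_first => /(congr1 val) eq_k.
by rewrite -[LHS]eq_k.
Qed.

Lemma edge_target_collision k1 k2 :
  edge_target X k1 = edge_target X k2 -> k1 != k2 ->
  k1 = X ord0 :> nat \/ k2 = X ord0 :> nat.
Proof.
move=> same_target; rewrite -(inj_eq val_inj) /=.
move: (edge_target_last k1) (edge_target_last k2); rewrite same_target /bump; lia.
Qed.

Lemma edge_target_consecutive :
  edge_target X (lift ord0 (X ord0)) = edge_target X (lift ord_max (X ord0)).
Proof.
apply/permP => i; apply: val_inj; rewrite /= !delete_perm_val !lift_perm_first.
have := ltn_ord (X ord0).
case: (unliftP ord_max (lift ord0 i)) => [j pos_j | ->]; last first.
  by rewrite !lift_perm_id /= /bump /unbump; lia.
have : X j != X ord0.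
  rewrite (inj_eq perm_inj); apply: contraTneq (neq_lift ord0 i) => j0.
  by rewrite negbK pos_j j0; apply/eqP/val_inj.
rewrite -(inj_eq val_inj) pos_j !lift_perm_lift /= /bump /unbump; lia.
Qed.

Lemma num_edges_le2 (Y : 'S_l.+1) : num_edges (n := l.+2) X Y <= 2.
Proof.
rewrite num_edgesE; apply: (@card_ord_val_le2 _ _ (Y ord_max)) => k.
by rewrite inE => /eqP <-; rewrite [nat_of_ord k]edge_target_last /bump; lia.
Qed.

Lemma num_edges_gt1 (Y : 'S_l.+1) :
  1 < num_edges (n := l.+2) X Y -> Y = edge_target X (lift ord_max (X ord0)).
Proof.
rewrite num_edgesE => /card_gt1P [k1 [k2 []]].
rewrite !inE => /eqP <- /eqP target_k2 k12.
have first_letter (k : 'I_l.+2) : k = X ord0 :> nat -> k = lift ord_max (X ord0).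
  by move=> eq_k; apply: ord_inj; rewrite lift_max.
by have [/first_letter -> | /first_letter <-] :=
  edge_target_collision (esym target_k2) k12.
Qed.

Lemma num_edges_consecutive :
  num_edges (n := l.+2) X (edge_target X (lift ord_max (X ord0))) = 2.
Proof.
apply/eqP; rewrite eqn_leq num_edges_le2 num_edgesE; apply/card_gt1P.
exists (lift ord0 (X ord0)), (lift ord_max (X ord0)).
rewrite !inE edge_target_consecutive eqxx -(inj_eq (@ord_inj _)) lift0 lift_max.
by split=> //; lia.
Qed.

End Clusters.

Theorem lemma2 (n : nat) (hn : 2 <= n) :
  (forall X : 'S_n.-1, exists! Y : 'S_n.-1, num_edges X Y = 2) /\
  (forall X Y : 'S_n.-1, num_edges X Y < 3).
Proof.
case: n hn => [|[|l]] // _.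
split=> [X | X Y]; last by rewrite ltnS num_edges_le2.
exists (edge_target X (lift ord_max (X ord0))).
split; first exact: num_edges_consecutive.
by move=> Y two_edges; apply/esym/num_edges_gt1; rewrite two_edges.
Qed.
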